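(* There exists a set $W \subseteq \mathbb{Z}$ such that $W + W = \mathbb{Z}$ and $W$ contains no 3-term arithmetic progression.
   Context: For $X, Y \subseteq \mathbb{Z}$, $X + Y = \{x + y : x \in X, y \in Y\}$. A 3-term arithmetic progression in $W$ is a triple $w - d, w, w + d$ of elements of $W$ with $d \neq 0$. *)

From Stdlib Require Import ZArith.
Open Scope Z_scope.

Definition sumset (X Y : Z -> Prop) : Z -> Prop :=
  fun z => exists x y, X x /\ Y y /\ z = x + y.

Definition has_3AP (W : Z -> Prop) : Prop :=
  exists w d, d <> 0 /\ W (w - d) /\ W w /\ W (w + d).

(* Let A be the set of naturals whose base-3 digits are all 0 or 1.  Adding
   two such numbers produces no carries, so a + c = 2b in A forces equal
   digits and hence a = c: A is 3AP-free.  Digit sums 0, 1, 2 give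
   A + A = N and digit differences -1, 0, 1 (balanced ternary) give
   A - A = Z.  The set W = 2A ∪ (-1 - 2A) then satisfies W + W = Z: even
   numbers come from 2A + 2A and (-1 - 2A) + (-1 - 2A), odd ones from
   2A + (-1 - 2A).  A 3AP in W must have both ends in the same half, by
   parity, and its middle in that half too, by sign, so it pulls back to
   a 3AP in A. *)

From Stdlib Require Import ZArith Lia.
Open Scope Z_scope.

Lemma has_3AP_midpoint (W : Z -> Prop) :
  has_3AP W <-> exists x y z, W x /\ W y /\ W z /\ x + z = 2 * y /\ x <> z.
Proof.
  split.
  - intros (w & d & Hd & Hx & Hy & Hz).
    exists (w - d), w, (w + d); repeat split; auto; lia.
  - intros (x & y & z & Hx & Hy & Hz & Hmid & Hxz).
    exists y, (y - x); repeat split; auto; try lia.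
    + now replace (y - (y - x)) with x by lia.
    + now replace (y + (y - x)) with z by lia.
Qed.

Section MirrorDouble.

Variable A : Z -> Prop.

Definition mirror_double : Z -> Prop :=
  fun x => exists a, A a /\ (x = 2 * a \/ x = -1 - 2 * a).

Lemma mirror_double_sumset_full :
  (forall n, 0 <= n -> sumset A A n) ->
  (forall n, exists a c, A a /\ A c /\ n = a - c) ->
  forall z, sumset mirror_double mirror_double z.
Proof.
  intros Hsum Hdiff z.
  pose proof (Z.div_mod z 2 ltac:(lia)) as Hz.
  pose proof (Z.mod_pos_bound z 2 ltac:(lia)).
  set (m := z / 2) in Hz.
  destruct (Z.eq_dec (z mod 2) 1) as [Hodd | Heven].
  - destruct (Hdiff (m + 1)) as (a & c & Ha & Hc & E).
    exists (2 * a), (-1 - 2 * c).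
    split; [| split]; [exists a | exists c | lia]; auto.
  - destruct (Z_le_gt_dec 0 m) as [Hm | Hm].
    + destruct (Hsum m Hm) as (a & c & Ha & Hc & E).
      exists (2 * a), (2 * c).
      split; [| split]; [exists a | exists c | lia]; auto.
    + destruct (Hsum (-1 - m) ltac:(lia)) as (a & c & Ha & Hc & E).
      exists (-1 - 2 * a), (-1 - 2 * c).
      split; [| split]; [exists a | exists c | lia]; auto.
Qed.

Lemma mirror_double_3AP_free :
  (forall a, A a -> 0 <= a) -> ~ has_3AP A -> ~ has_3AP mirror_double.
Proof.
  intros Hnonneg HA.
  rewrite has_3AP_midpoint in *.
  intros (x & y & z & (a & Ha & Ex) & (b & Hb & Ey) & (c & Hc & Ez) & Hmid & Hxz).
  apply HA; exists a, b, c.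
  pose proof (Hnonneg a Ha); pose proof (Hnonneg b Hb); pose proof (Hnonneg c Hc).
  (* parity separates the two halves; the sign of the middle does the rest *)
  destruct Ex, Ey, Ez; repeat split; auto; lia.
Qed.

End MirrorDouble.

Inductive ternary01 : Z -> Prop :=
| ternary01_0 : ternary01 0
| ternary01_digit0 n : ternary01 n -> ternary01 (3 * n)
| ternary01_digit1 n : ternary01 n -> ternary01 (3 * n + 1).

Lemma ternary01_nonneg n : ternary01 n -> 0 <= n.
Proof. induction 1; lia. Qed.

Lemma ternary01_inv n :
  ternary01 n -> exists q r, n = 3 * q + r /\ (r = 0 \/ r = 1) /\ ternary01 q.
Proof.
  destruct 1.
  - exists 0, 0; repeat split; auto using ternary01_0.
  - exists n, 0; repeat split; auto; lia.
  - exists n, 1; repeat split; auto.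
Qed.

Lemma ternary01_midpoint a b c :
  ternary01 a -> ternary01 b -> ternary01 c -> a + c = 2 * b -> a = c.
Proof.
  revert a c; induction b as [b IH] using Z_lt_abs_induction.
  intros a c Ha Hb Hc Hmid.
  pose proof (ternary01_nonneg a Ha); pose proof (ternary01_nonneg c Hc).
  destruct (Z.eq_dec b 0) as [-> | Hb0]; [lia |].
  destruct (ternary01_inv a Ha) as (a' & ra & -> & Hra & Ha').
  destruct (ternary01_inv b Hb) as (b' & rb & -> & Hrb & Hb').
  destruct (ternary01_inv c Hc) as (c' & rc & -> & Hrc & Hc').
  pose proof (ternary01_nonneg b' Hb').
  (* no carry: the last digits already satisfy ra + rc = 2 rb, so ra = rc *)
  assert (Hlast : ra = rc /\ a' + c' = 2 * b')
    by (destruct Hra, Hrb, Hrc; subst; lia).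
  destruct Hlast as [-> Hmid'].
  rewrite (IH b' ltac:(lia) a' c' Ha' Hb' Hc' Hmid'); reflexivity.
Qed.

Lemma ternary01_3AP_free : ~ has_3AP ternary01.
Proof.
  rewrite has_3AP_midpoint.
  intros (x & y & z & Hx & Hy & Hz & Hmid & Hxz).
  exact (Hxz (ternary01_midpoint x y z Hx Hy Hz Hmid)).
Qed.

Lemma ternary01_sumset_nonneg n : 0 <= n -> sumset ternary01 ternary01 n.
Proof.
  induction n as [n IH] using Z_lt_abs_induction; intros Hn.
  destruct (Z.eq_dec n 0) as [-> | Hn0].
  { exists 0, 0; repeat split; auto using ternary01_0. }
  pose proof (Z.div_mod n 3 ltac:(lia)).
  pose proof (Z.mod_pos_bound n 3 ltac:(lia)).
  destruct (IH (n / 3) ltac:(lia) ltac:(lia)) as (a & c & Ha & Hc & E).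
  assert (Hr : n mod 3 = 0 \/ n mod 3 = 1 \/ n mod 3 = 2) by lia.
  destruct Hr as [Hr | [Hr | Hr]].
  - exists (3 * a), (3 * c); repeat split; try constructor; auto; lia.
  - exists (3 * a + 1), (3 * c); repeat split; try constructor; auto; lia.
  - exists (3 * a + 1), (3 * c + 1); repeat split; try constructor; auto; lia.
Qed.

Lemma ternary01_difference n : exists a c, ternary01 a /\ ternary01 c /\ n = a - c.
Proof.
  induction n as [n IH] using Z_lt_abs_induction.
  destruct (Z.eq_dec n 0) as [-> | Hn0].
  { exists 0, 0; repeat split; auto using ternary01_0. }
  (* balanced ternary: n = 3 q + r with r in {-1, 0, 1} *)
  pose proof (Z.div_mod (n + 1) 3 ltac:(lia)).
  pose proof (Z.mod_pos_bound (n + 1) 3 ltac:(lia)).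
  destruct (IH ((n + 1) / 3) ltac:(lia)) as (a & c & Ha & Hc & E).
  assert (Hr : (n + 1) mod 3 = 0 \/ (n + 1) mod 3 = 1 \/ (n + 1) mod 3 = 2) by lia.
  destruct Hr as [Hr | [Hr | Hr]].
  - exists (3 * a), (3 * c + 1); repeat split; try constructor; auto; lia.
  - exists (3 * a), (3 * c); repeat split; try constructor; auto; lia.
  - exists (3 * a + 1), (3 * c); repeat split; try constructor; auto; lia.
Qed.

Theorem proposition3 :
  exists W : Z -> Prop, (forall z : Z, sumset W W z) /\ ~ has_3AP W.
Proof.
  exists (mirror_double ternary01); split.
  - apply mirror_double_sumset_full.
    + exact ternary01_sumset_nonneg.
    + exact ternary01_difference.
  - apply mirror_double_3AP_free.
    + exact ternary01_nonneg.
    + exact ternary01_3AP_free.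
Qed.
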